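(* Let $k\ge s\ge1$ and let the distinct abscissae $\tau_1,\dots,\tau_k\in[0,1]$ be such that the interpolatory quadrature formula $(\omega_i,\tau_i)_{i=1}^k$ has order at least $2s$ (i.e. is exact for all polynomials of degree at most $2s-1$). Then HBVM$(k,s)$ is perfectly $A$-stable, whatever the choice of the fundamental abscissae $c_1,\dots,c_s$ among the $\{\tau_i\}$.
   Context: $\omega_i=\int_0^1\ell_i(t)\,\mathrm{d}t$ with $\ell_i$ the Lagrange polynomials on the nodes $\{\tau_i\}$. Let $P_i(t)=\sqrt{2i-1}\,\hat P_{i-1}(t)$, where $\hat P_{i-1}$ is the shifted Legendre polynomial of degree $i-1$ on $[0,1]$ (so $\{P_i\}$ is orthonormal on $[0,1]$). HBVM$(k,s)$ is the Runge--Kutta method with abscissae $\tau_i$, weights $\omega_i$ and Butcher matrix $A=\mathcal I_s\mathcal P_s^T\Omega$, where $\Omega=\mathrm{diag}(\omega_1,\dots,\omega_k)$, $(\mathcal I_s)_{ij}=\int_0^{\tau_i}P_j(x)\,\mathrm{d}x$, $(\mathcal P_s)_{ij}=P_j(\tau_i)$ ($i=1,\dots,k$, $j=1,\dots,s$). The $\{\tau_i\}$ are split into $s$ fundamental and $k-s$ silent abscissae. A method is perfectly $A$-stable if, applied to the test equation $y'=\lambda y$, its region of absolute stability $\{q=h\lambda\in\mathbb C: |R(q)|<1\}$ coincides exactly with the open left half complex plane $\mathbb C^-$. *)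

From HB Require Import structures.
From mathcomp Require Import all_boot all_order all_algebra.
From mathcomp Require Import all_classical all_reals.
From mathcomp Require Import topology normedtype measure lebesgue_measure
  lebesgue_integral.
From mathcomp Require Import complex.
Set Implicit Arguments. Unset Strict Implicit. Unset Printing Implicit Defensive.
Import Order.TTheory GRing.Theory Num.Theory.
Local Open Scope ring_scope.

Section HBVM.
Variable R : realType.

Definition integ (a b : R) (f : R -> R) : R :=
  Rintegral lebesgue_measure `[a, b]%classic f.

(* shifted Legendre polynomial of degree n on [0,1], Rodrigues formula:
   hatP_n(x) = 1/n! d^n/dx^n (x^2 - x)^n  (= P_n(2x-1)) *)
Definition shLegendre (n : nat) : {poly R} :=
  (n`!%:R)^-1 *: ((('X ^+ 2 - 'X) ^+ n) ^`(n)).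

(* orthonormal basis: P_{j+1} = sqrt(2j+1) hatP_j, indexed from 0 *)
Definition Pn (j : nat) : {poly R} := Num.sqrt (j.*2.+1%:R) *: shLegendre j.

Definition lagrange k (tau : 'I_k -> R) (i : 'I_k) : {poly R} :=
  \prod_(j < k | j != i) ((tau i - tau j)^-1 *: ('X - (tau j)%:P)).

Definition qweight k (tau : 'I_k -> R) (i : 'I_k) : R :=
  integ 0 1 (fun t => (lagrange tau i).[t]).

Definition quad_exact_deg k (tau : 'I_k -> R) (d : nat) : Prop :=
  forall p : {poly R}, (size p <= d.+1)%N ->
    \sum_(i < k) qweight tau i * p.[tau i] = integ 0 1 (fun t => p.[t]).

Definition Imat k s (tau : 'I_k -> R) : 'M[R]_(k, s) :=
  \matrix_(i < k, j < s) integ 0 (tau i) (fun x => (Pn j).[x]).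
Definition Pmat k s (tau : 'I_k -> R) : 'M[R]_(k, s) :=
  \matrix_(i < k, j < s) (Pn j).[tau i].
Definition Omega k (tau : 'I_k -> R) : 'M[R]_k :=
  diag_mx (\row_(i < k) qweight tau i).
Definition hbvm_A k s (tau : 'I_k -> R) : 'M[R]_k :=
  Imat s tau *m (Pmat s tau)^T *m Omega tau.
Definition hbvm_b k (tau : 'I_k -> R) : 'rV[R]_k := \row_(i < k) qweight tau i.

End HBVM.

(* Stability function of the RK method (A, b) on y' = lambda y, q = h lambda:
   R(q) = 1 + q b^T (I - q A)^{-1} e, defined when I - qA is invertible. *)
Definition rk_stab_defined (R : rcfType) k (A : 'M[R]_k) (q : R[i]) : bool :=
  (1%:M - q *: map_mx (real_complex R) A) \in unitmx.

Definition rk_stab (R : rcfType) k (A : 'M[R]_k) (b : 'rV[R]_k) (q : R[i]) : R[i] :=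
  1 + q * (map_mx (real_complex R) b *m invmx (1%:M - q *: map_mx (real_complex R) A)
           *m (const_mx 1 : 'cV[R[i]]_k)) 0 0.

Definition abs_stab_region (R : rcfType) k (A : 'M[R]_k) (b : 'rV[R]_k) : set R[i] :=
  [set q | rk_stab_defined A q /\ `|rk_stab A b q| < 1]%classic.

Definition perfectly_A_stable (R : rcfType) k (A : 'M[R]_k) (b : 'rV[R]_k) : Prop :=
  abs_stab_region A b = [set q : R[i] | Re q < 0]%classic.

From HB Require Import structures.
From mathcomp Require Import all_boot all_order all_algebra.
From mathcomp Require Import all_classical all_reals.
From mathcomp Require Import topology normedtype measure lebesgue_measure.
From mathcomp Require Import lebesgue_integral derive realfun ftc.
From mathcomp Require Import complex ring zify.
Import Order.TTheory GRing.Theory Num.Theory.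
Set Implicit Arguments. Unset Strict Implicit. Unset Printing Implicit Defensive.
Local Open Scope ring_scope.
Local Open Scope sesquilinear_scope.

(* Write A = I_s N with N = P_s^T Omega.  Exactness of the quadrature up to
   degree 2s-1 gives N e = e_1 and, for X = N I_s, X + X^T = e_1 e_1^T.  The
   push-through identity turns the stability function into
   R(q) = 1 + q e_1^T (I - qX)^-1 e_1, and for the solution g of
   (I - qX) g = e_1 the skew-symmetry of X - e_1 e_1^T / 2 yields the energy
   identity |R(q)|^2 = 1 + 2 Re(q) |g|^2.  Hence |R(q)| < 1 iff Re(q) < 0, and
   the same identity with right-hand side 0 shows that I - qX is invertible
   whenever Re(q) < 0. *)

Lemma mulmx_1_sub_inv (R : pzRingType) n (A J : 'M[R]_n) :
  (1%:M - A) *m J = 1%:M -> A *m J = J - 1%:M.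
Proof. by move=> <-; rewrite mulmxBl mul1mx opprB addrC subrK. Qed.

Section PushThrough.
Variables (F : fieldType) (m n : nat) (M : 'M[F]_(m, n)) (N : 'M[F]_(n, m)).

Lemma mulmx_1_sub_mulmxC J : (1%:M - N *m M) *m J = 1%:M ->
  (1%:M - M *m N) *m (1%:M + M *m J *m N) = 1%:M.
Proof.
move=> /mulmx_1_sub_inv NMJE.
rewrite mulmxDr mulmx1 mulmxBl mul1mx.
have -> : M *m N *m (M *m J *m N) = M *m (N *m M *m J) *m N by rewrite !mulmxA.
by rewrite NMJE mulmxBr mulmx1 mulmxBl opprB [M *m J *m N + _]addrC !subrK.
Qed.

Lemma invmx_1_sub_mulmxC : (1%:M - N *m M) \in unitmx ->
  invmx (1%:M - M *m N) = 1%:M + M *m invmx (1%:M - N *m M) *m N.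
Proof.
move=> /mulmxV /mulmx_1_sub_mulmxC MNJ; have [MN_unit _] := mulmx1_unit MNJ.
by rewrite -[LHS]mulmx1 -[X in _ *m X]MNJ mulmxA mulVmx ?mul1mx.
Qed.

Lemma row_invmx_1_sub_mulmx (i0 : 'I_n) : (1%:M - N *m M) \in unitmx ->
  N *m (const_mx 1 : 'cV_m) = delta_mx i0 0 ->
  (row i0 N *m invmx (1%:M - M *m N) *m (const_mx 1 : 'cV_m)) 0 0 =
  invmx (1%:M - N *m M) i0 i0.
Proof.
move=> NM_unit N1; rewrite invmx_1_sub_mulmxC //.
have /mulmx_1_sub_inv NMJE := mulmxV NM_unit; set J := invmx _ in NMJE *.
rewrite mulmxDr mulmx1 mulmxDl -!row_mul.
have -> : N *m (M *m J *m N) *m (const_mx 1 : 'cV_m) =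
    N *m M *m J *m (N *m const_mx 1).
  by rewrite !mulmxA.
by rewrite N1 NMJE mulmxBl mul1mx -linearD /= addrC subrK -colE !mxE.
Qed.

End PushThrough.

Lemma unitmx_1_sub_mulmxC (F : fieldType) m n
    (M : 'M[F]_(m, n)) (N : 'M[F]_(n, m)) :
  ((1%:M - M *m N) \in unitmx) = ((1%:M - N *m M) \in unitmx).
Proof.
by apply/idP/idP => /mulmxV /mulmx_1_sub_mulmxC /mulmx1_unit [].
Qed.

Lemma addC_conjC (C : numClosedFieldType) (q : C) : q + q^* = 'Re q *+ 2.
Proof. by rewrite ReE -mulr_natr divfK ?pnatr_eq0. Qed.

Section SkewEnergy.
Variables (C : numClosedFieldType) (n : nat) (i0 : 'I_n) (Y : 'M[C]_n).
Hypothesis Y_real : Y ^ Num.conj = Y.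
Hypothesis Y_skew : Y + Y^T = delta_mx i0 i0.
Implicit Types (g h : 'cV[C]_n) (q : C).

Definition sqnorm g := (g ^t* *m g) 0 0.

Lemma sqnormE g : sqnorm g = \sum_i `|g i 0| ^+ 2.
Proof. by rewrite /sqnorm mxE; apply: eq_bigr => i _; rewrite !mxE normCKC. Qed.

Lemma sqnorm_ge0 g : 0 <= sqnorm g.
Proof. by rewrite sqnormE sumr_ge0 // => i _; rewrite exprn_ge0. Qed.

Lemma sqnorm_eq0 g : (sqnorm g == 0) = (g == 0).
Proof.
rewrite sqnormE psumr_eq0; last by move=> i _; rewrite exprn_ge0.
apply/allP/eqP => [g0|-> i _]; last by rewrite mxE normr0 expr2 mul0r eqxx.
apply/matrixP => i j; rewrite (ord1 j) mxE; apply/eqP.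
by rewrite -normr_eq0 -sqrf_eq0; apply: g0; rewrite mem_index_enum.
Qed.

Lemma skew_form_add_conj g :
  (g ^t* *m Y *m g) 0 0 + ((g ^t* *m Y *m g) 0 0)^* = `|g i0 0| ^+ 2.
Proof.
set S := (g ^t* *m Y *m g) 0 0.
have -> : S^* = (g ^t* *m Y^T *m g) 0 0.
  transitivity ((map_mx Num.conj (g ^t* *m Y *m g))^T 0 0).
    by rewrite 2!mxE.
  have conjK : map_mx Num.conj (map_mx Num.conj g) = g.
    by apply/matrixP => i j; rewrite !mxE conjCK.
  by rewrite !map_mxM Y_real !trmx_mul !map_trmx trmxK conjK mulmxA.
transitivity ((g ^t* *m (Y + Y^T) *m g) 0 0).
  by rewrite mulmxDr mulmxDl [RHS]mxE.
rewrite Y_skew -(mul_delta_mx (0 : 'I_1)).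
by rewrite !mulmxA -colE -mulmxA -rowE !mxE big_ord1 !mxE normCKC.
Qed.

Lemma energy_identity q g h : (1%:M - q *: Y) *m g = h ->
  q^* * (g ^t* *m h) 0 0 + q * ((g ^t* *m h) 0 0)^* =
  (q + q^*) * sqnorm g - `|q| ^+ 2 * `|g i0 0| ^+ 2.
Proof.
move=> <-; set d := (g ^t* *m _) 0 0; have := skew_form_add_conj g.
set S := (g ^t* *m Y *m g) 0 0 => eS.
have dE : d = sqnorm g - q * S.
  rewrite /d mulmxA mulmxBr mulmx1 mulmxBl -scalemxAr -scalemxAl.
  by rewrite mxE [(- _ : 'M_1) 0 0]mxE [(_ *: _ : 'M_1) 0 0]mxE.
have nR : (sqnorm g)^* = sqnorm g by rewrite geC0_conj ?sqnorm_ge0.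
rewrite dE rmorphB rmorphM /= nR normCK -eS; ring.
Qed.

Lemma energy_identity_delta q g : (1%:M - q *: Y) *m g = delta_mx i0 0 ->
  `|1 + q * g i0 0| ^+ 2 = 1 + 'Re q *+ 2 * sqnorm g.
Proof.
move/energy_identity; rewrite -colE !mxE conjCK !normCK -addC_conjC => eE.
rewrite rmorphD rmorphM /= rmorph1.
have -> : (1 + q * g i0 0) * (1 + q^* * (g i0 0)^*) =
  1 + (q^* * (g i0 0)^* + q * g i0 0) + q * q^* * (g i0 0 * (g i0 0)^*) by ring.
by rewrite eE; ring.
Qed.

Lemma skew_kernel_eq0 q g : 'Re q < 0 -> (1%:M - q *: Y) *m g = 0 -> g = 0.
Proof.
move=> Req_lt0 /energy_identity; rewrite mulmx0 mxE conjC0 !mulr0 addr0.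
move/esym/eqP; rewrite subr_eq0 addC_conjC => /eqP eN.
have : 0 <= 'Re q *+ 2 * sqnorm g by rewrite eN mulr_ge0 ?exprn_ge0.
rewrite nmulr_rge0 ?pmulrn_llt0 // => N_le0.
by apply/eqP; rewrite -sqnorm_eq0 eq_le N_le0 sqnorm_ge0.
Qed.

Lemma skew_unitmx q : 'Re q < 0 -> (1%:M - q *: Y) \in unitmx.
Proof.
move=> Req_lt0; rewrite -unitmx_tr unitmxE unitfE.
apply/det0P => -[v v_neq0 vA].
have : (1%:M - q *: Y) *m v^T = 0.
  by rewrite -[LHS]trmxK trmx_mul trmxK vA trmx0.
move/(skew_kernel_eq0 Req_lt0)/(congr1 trmx); rewrite trmxK trmx0 => v0.
by rewrite v0 eqxx in v_neq0.
Qed.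

End SkewEnergy.

Section SkewFactorStability.
Variables (R : rcfType) (k s : nat) (i0 : 'I_s).
Variables (M : 'M[R]_(k, s)) (N : 'M[R]_(s, k)).
Hypothesis N_const1 : N *m (const_mx 1 : 'cV_k) = delta_mx i0 0.
Hypothesis NM_skew : N *m M + (N *m M)^T = delta_mx i0 i0.

Local Notation toC := (map_mx (real_complex R)).
Let X := toC (N *m M).

Let X_real : X ^ Num.conj = X.
Proof. by apply/matrixP => i j; rewrite !mxE; exact: conjc_real. Qed.

Let X_skew : X + X^T = delta_mx i0 i0.
Proof. by rewrite map_trmx -map_mxD NM_skew map_delta_mx. Qed.

Let toC_AE q : q *: toC (M *m N) = (q *: toC M) *m toC N.
Proof. by rewrite map_mxM scalemxAl. Qed.

Let toC_NME q : toC N *m (q *: toC M) = q *: X.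
Proof. by rewrite -scalemxAr -map_mxM. Qed.

Lemma rk_stab_definedE q :
  rk_stab_defined (M *m N) q = (1%:M - q *: X \in unitmx).
Proof. by rewrite /rk_stab_defined toC_AE unitmx_1_sub_mulmxC toC_NME. Qed.

Lemma rk_stab_factorE q : 1%:M - q *: X \in unitmx ->
  rk_stab (M *m N) (row i0 N) q = 1 + q * invmx (1%:M - q *: X) i0 i0.
Proof.
move=> qX_unit; have N1 : toC N *m (const_mx 1 : 'cV_k) = delta_mx i0 0.
  rewrite -(rmorph1 (real_complex R)) -map_const_mx -map_mxM.
  by rewrite N_const1 map_delta_mx.
rewrite /rk_stab toC_AE map_row row_invmx_1_sub_mulmx ?toC_NME //.
Qed.

Lemma rk_stab_lt1 q : 1%:M - q *: X \in unitmx ->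
  (`|rk_stab (M *m N) (row i0 N) q| < 1) = ('Re q < 0).
Proof.
move=> qX_unit; set g := col i0 (invmx (1%:M - q *: X)).
have g_sol : (1%:M - q *: X) *m g = delta_mx i0 0.
  by rewrite /g colE mulmxA mulmxV ?mul1mx.
have g_gt0 : 0 < sqnorm g.
  rewrite lt_def sqnorm_ge0 andbT sqnorm_eq0; apply/eqP => g0.
  move/matrixP/(_ i0 0): g_sol; rewrite g0 mulmx0 !mxE !eqxx => /eqP.
  by rewrite eq_sym oner_eq0.
have gE : invmx (1%:M - q *: X) i0 i0 = g i0 0 by rewrite mxE.
rewrite -(expr_lt1 (n := 2)) // rk_stab_factorE // gE.
rewrite (energy_identity_delta X_real X_skew g_sol).
by rewrite gtrDl pmulr_llt0 // pmulrn_llt0.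
Qed.

Theorem perfectly_A_stable_skew_factor : perfectly_A_stable (M *m N) (row i0 N).
Proof.
apply/seteqP; split => q /=.
  by case; rewrite rk_stab_definedE => /rk_stab_lt1 ->.
move=> Req_lt0; have qX_unit := skew_unitmx X_real X_skew Req_lt0.
by split; [rewrite rk_stab_definedE | rewrite rk_stab_lt1].
Qed.

End SkewFactorStability.

Section PolyIntegral.
Variable R : realType.
Implicit Types (p F : {poly R}) (a b : R).

Definition antideriv p : {poly R} :=
  \poly_(i < (size p).+1) (if i is i'.+1 then p`_i' / i'.+1%:R else 0).

Lemma deriv_antideriv p : (antideriv p)^`() = p.
Proof.
apply/polyP => i; rewrite coef_deriv coef_poly ltnS.
case: ifP => [_|/negbT]; last by rewrite -leqNgt mul0rn => /(nth_default 0).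
by rewrite -mulrnAr -mulr_natr mulVf ?mulr1 // pnatr_eq0.
Qed.

Lemma horner_antideriv0 p : (antideriv p).[0] = 0.
Proof. by rewrite horner_coef0 coef_poly. Qed.

Lemma size_antideriv p : (size (antideriv p) <= (size p).+1)%N.
Proof. exact: size_poly. Qed.

Lemma integ_deriv_poly F a b : a <= b ->
  integ a b (fun x => F^`().[x]) = F.[b] - F.[a].
Proof.
rewrite le_eqVlt => /predU1P[->|ab].
  by rewrite /integ set_itv1 Rintegral_set1 subrr.
have horner_LR (q : {poly R}) : derivable_oo_LRcontinuous (horner q) a b.
  split.
  - by move=> x _; exact: derivable_horner.
  - by apply: cvg_at_right_filter; exact: continuous_horner.
  - by apply: cvg_at_left_filter; exact: continuous_horner.
rewrite /integ /Rintegral (continuous_FTC2 ab _ (horner_LR F)) //.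
- exact: derivable_oo_LRcontinuous_within (horner_LR _).
- by move=> x _; rewrite -derivE.
Qed.

Lemma integ0_poly p b : 0 <= b ->
  integ 0 b (fun x => p.[x]) = (antideriv p).[b].
Proof.
move=> b_ge0; rewrite -{1}[p]deriv_antideriv integ_deriv_poly //.
by rewrite horner_antideriv0 subr0.
Qed.

End PolyIntegral.

Lemma horner_derivn_expXsubC_mul (R : comNzRingType) (a : R) m n
    (r : {poly R}) :
  (m < n)%N -> ((('X - a%:P) ^+ n * r)^`(m)).[a] = 0.
Proof.
elim: m n r => [|m IHm] [|n] r // mn.
  by rewrite hornerM horner_exp hornerXsubC subrr expr0n mul0r.
rewrite derivSn; have -> : (('X - a%:P) ^+ n.+1 * r)^`() =
    ('X - a%:P) ^+ n * (r *+ n.+1 + ('X - a%:P) * r^`()).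
  by rewrite derivM deriv_exp derivXsubC mul1r /= exprS; ring.
by rewrite IHm.
Qed.

Section Legendre.
Variable R : realType.

Lemma Pn0 : Pn R 0 = 1.
Proof. by rewrite /Pn /shLegendre expr0 fact0 invr1 sqrtr1 !scale1r. Qed.

Lemma size_Pn j : (size (Pn R j) <= j.+1)%N.
Proof.
have size_g : (size (('X ^+ 2 - 'X : {poly R}) ^+ j) <= j.*2.+1)%N.
  apply: leq_trans (size_poly_exp_leq _ _) _.
  by rewrite size_polyDl size_polyXn ?size_polyN ?size_polyX // mul2n.
rewrite /Pn /shLegendre; apply: leq_trans (size_scale_leq _ _) _.
apply: leq_trans (size_scale_leq _ _) _.
apply/leq_sizeP => i ji; rewrite coef_derivn nth_default ?mul0rn //.
apply: leq_trans size_g _; lia.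
Qed.

Lemma integ01_Pn j : integ 0 1 (fun x => (Pn R j).[x]) = (j == 0)%:R.
Proof.
case: j => [|j].
  by rewrite Pn0 -derivX integ_deriv_poly ?ler01 // !hornerX subr0.
set g := ('X ^+ 2 - 'X : {poly R}) ^+ j.+1.
have -> : Pn R j.+1 =
    (Num.sqrt (j.+1).*2.+1%:R *: ((j.+1)`!%:R^-1 *: g^`(j)))^`().
  by rewrite !derivZ -derivnS.
have gE : g = ('X - 0%:P) ^+ j.+1 * ('X - 1%:P) ^+ j.+1.
  by rewrite /g -exprMn subr0; congr (_ ^+ _); ring.
have g0 : g^`(j).[0] = 0 by rewrite gE horner_derivn_expXsubC_mul.
have g1 : g^`(j).[1] = 0 by rewrite gE mulrC horner_derivn_expXsubC_mul.
by rewrite integ_deriv_poly ?ler01 // !hornerZ g0 g1 !mulr0 subrr.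
Qed.

Lemma antideriv_Pn1 j : (antideriv (Pn R j)).[1] = (j == 0)%:R.
Proof. by rewrite -integ0_poly ?ler01 ?integ01_Pn. Qed.

End Legendre.

Section HBVMFactor.
Variables (R : realType) (k s : nat) (tau : 'I_k -> R) (i0 : 'I_s).
Hypothesis tau_ge0 : forall i, 0 <= tau i.
Hypothesis tau_exact : quad_exact_deg tau (2 * s).-1.
Hypothesis i0_eq0 : val i0 = 0%N.

Definition hbvm_N : 'M[R]_(s, k) := (Pmat s tau)^T *m Omega tau.

Lemma hbvm_NE j l : hbvm_N j l = qweight tau l * (Pn R j).[tau l].
Proof. by rewrite /hbvm_N /Omega mul_mx_diag !mxE mulrC. Qed.

Lemma ImatE l j : Imat s tau l j = (antideriv (Pn R j)).[tau l].
Proof. by rewrite mxE integ0_poly ?tau_ge0. Qed.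

Lemma hbvm_AE : hbvm_A s tau = Imat s tau *m hbvm_N.
Proof. by rewrite /hbvm_A mulmxA. Qed.

Lemma hbvm_bE : hbvm_b tau = row i0 hbvm_N.
Proof.
by apply/rowP => l; rewrite [RHS]mxE hbvm_NE i0_eq0 Pn0 hornerC mulr1 mxE.
Qed.

Lemma hbvm_N_const1 : hbvm_N *m (const_mx 1 : 'cV_k) = delta_mx i0 0.
Proof.
apply/colP => j; rewrite [LHS]mxE [RHS]mxE.
rewrite (eq_bigr (fun l => qweight tau l * (Pn R j).[tau l])); last first.
  by move=> l _; rewrite [const_mx 1 l 0]mxE mulr1 hbvm_NE.
rewrite tau_exact ?integ01_Pn.
  by rewrite eqxx andbT -val_eqE i0_eq0.
by apply: leq_trans (size_Pn R j) _; have := ltn_ord j; lia.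
Qed.

Lemma size_Pn_mul_antideriv i j :
  (size (Pn R i * antideriv (Pn R j))%R <= i + j + 2)%N.
Proof.
apply: leq_trans (size_polyMleq _ _) _.
have := size_Pn R i; have := size_antideriv (Pn R j); have := size_Pn R j; lia.
Qed.

(* By exactness, entry (i, j) is the integral over [0, 1] of
   P_i Q_j + Q_i P_j = (Q_i Q_j)'. *)
Lemma hbvm_NI_skew :
  hbvm_N *m Imat s tau + (hbvm_N *m Imat s tau)^T = delta_mx i0 i0.
Proof.
apply/matrixP => i j; rewrite !mxE -big_split /=.
pose Q j := antideriv (Pn R j).
have -> : \sum_l (hbvm_N i l * Imat s tau l j + hbvm_N j l * Imat s tau l i) =
    \sum_l qweight tau l * (Pn R i * Q j + Q i * Pn R j).[tau l].
  by apply: eq_bigr => l _; rewrite !hbvm_NE !ImatE hornerD !hornerM; ring.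
rewrite tau_exact; last first.
  rewrite (leq_trans (size_polyD _ _)) // geq_max [Q i * _]mulrC /Q.
  have := ltn_ord i; have := ltn_ord j => j_lt_s i_lt_s.
  by apply/andP; split; apply: leq_trans (size_Pn_mul_antideriv _ _) _; lia.
have -> : Pn R i * Q j + Q i * Pn R j = (Q i * Q j)^`().
  by rewrite derivM !deriv_antideriv.
rewrite integ_deriv_poly ?ler01 //.
rewrite !hornerM !horner_antideriv0 mulr0 subr0 !antideriv_Pn1.
by rewrite -natrM mulnb -!val_eqE /= i0_eq0.
Qed.

End HBVMFactor.

Theorem theorem1p2 (R : realType) (k s : nat) (tau : 'I_k -> R)
  (c : 'I_s -> 'I_k) :
  (0 < s)%N -> (s <= k)%N ->
  injective tau -> (forall i, 0 <= tau i <= 1) ->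
  quad_exact_deg tau (2 * s).-1 ->
  injective c ->
  perfectly_A_stable (hbvm_A s tau) (hbvm_b tau).
Proof.
move=> s_gt0 _ _ tau01 tau_exact _.
have tau_ge0 i : 0 <= tau i by case/andP: (tau01 i).
pose i0 : 'I_s := Ordinal s_gt0.
rewrite hbvm_AE (hbvm_bE tau (i0 := i0)) //.
apply: perfectly_A_stable_skew_factor.
- exact: hbvm_N_const1.
- exact: hbvm_NI_skew.
Qed.
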